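(* Let $A$ be a finite-dimensional complex evolution algebra with natural basis $B=\{e_1,\dots,e_n\}$ and structure matrix $W=(\omega_{ij})$ (so $e_j^2=\sum_i\omega_{ij}e_i$). Then $A$ is m-semisimple if and only if for every $i=1,\dots,n$ there exists $a=\sum_{k=1}^n\alpha_ke_k\in\mathrm{lin}\{e_j^2:j\in D(i)\cup\{i\}\}$ such that the matrix $W\,\mathrm{diag}(\alpha_1,\dots,\alpha_n)$ has a non-zero eigenvalue.
   Context: An evolution algebra is an algebra with a basis $\{e_i\}$ (natural basis) with $e_ie_j=0$ for $i\neq j$. Descendents: $D^1(i)=\{j:\omega_{ji}\neq0\}$, $D^n(i)=\bigcup_{j\in D^{n-1}(i)}D^1(j)$, $D(i)=\bigcup_{n\ge1}D^n(i)$. For a complex algebra $A$: if $A$ has a unit $e$ put $\tilde A=A$, else $\tilde A=A\oplus\mathbb{C}\mathbf1$ (unitization, product $(a+\lambda\mathbf1)(b+\mu\mathbf1)=ab+\lambda b+\mu a+\lambda\mu\mathbf1$, $e=\mathbf1$). $x\in\tilde A$ is m-invertible if $L_x(y)=xy$ and $R_x(y)=yx$ are bijective on $\tilde A$; the m-spectrum is $\sigma^A_m(a)=\{\lambda\in\mathbb{C}:a-\lambda e\text{ not m-invertible}\}$ and $\rho_m(a)=\sup\{|\lambda|:\lambda\in\sigma^A_m(a)\}$ ($=0$ if empty). $A$ is m-semisimple if $\{0\}$ is the only ideal of $A$ contained in $\{a\in A:\rho_m(a)=0\}$. *)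

From HB Require Import structures.
From mathcomp Require Import all_boot all_order all_algebra.
Set Implicit Arguments. Unset Strict Implicit. Unset Printing Implicit Defensive.
Import Order.TTheory GRing.Theory Num.Theory.
Local Open Scope ring_scope.

(* The evolution algebra A = C^n with natural basis e_1..e_n (the standard
   basis of column vectors) and structure matrix W: e_j^2 = sum_i W i j e_i,
   e_i e_j = 0 (i <> j). *)
Definition evmul (C : numClosedFieldType) (n : nat) (W : 'M[C]_n)
  (x y : 'cV[C]_n) : 'cV[C]_n := W *m (\col_i (x i 0 * y i 0)).

Definition is_unit_elt (C : numClosedFieldType) (n : nat) (W : 'M[C]_n)
  (e : 'cV[C]_n) : Prop :=
  forall x, evmul W e x = x /\ evmul W x e = x.

Definition unital (C : numClosedFieldType) (n : nat) (W : 'M[C]_n) : Prop :=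
  exists e, is_unit_elt W e.

(* product in the unitization A (+) C1 : (a + l1)(b + m1) = ab + l b + m a + l m 1 *)
Definition uprod (C : numClosedFieldType) (n : nat) (W : 'M[C]_n)
  (x y : 'cV[C]_n * C) : 'cV[C]_n * C :=
  (evmul W x.1 y.1 + x.2 *: y.1 + y.2 *: x.1, x.2 * y.2).

Definition m_inv_A (C : numClosedFieldType) (n : nat) (W : 'M[C]_n)
  (x : 'cV[C]_n) : Prop :=
  bijective (evmul W x) /\ bijective (fun y => evmul W y x).

Definition m_inv_unitz (C : numClosedFieldType) (n : nat) (W : 'M[C]_n)
  (x : 'cV[C]_n * C) : Prop :=
  bijective (uprod W x) /\ bijective (fun y => uprod W y x).

Definition m_spec (C : numClosedFieldType) (n : nat) (W : 'M[C]_n)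
  (a : 'cV[C]_n) (lam : C) : Prop :=
  (exists e, is_unit_elt W e /\ ~ m_inv_A W (a - lam *: e))
  \/ (~ unital W /\ ~ m_inv_unitz W (a, - lam)).

(* rho_m(a) = 0, i.e. sup {|lam| : lam in sigma_m(a)} = 0 (with sup of the
   empty set equal to 0): every element of the m-spectrum has modulus 0. *)
Definition rho_m_zero (C : numClosedFieldType) (n : nat) (W : 'M[C]_n)
  (a : 'cV[C]_n) : Prop :=
  forall lam, m_spec W a lam -> `|lam| = 0.

Definition is_ideal (C : numClosedFieldType) (n : nat) (W : 'M[C]_n)
  (I : 'cV[C]_n -> Prop) : Prop :=
  [/\ I 0,
      (forall x y, I x -> I y -> I (x + y)),
      (forall (c : C) x, I x -> I (c *: x)),
      (forall x a, I x -> I (evmul W a x))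
    & (forall x a, I x -> I (evmul W x a))].

Definition m_semisimple (C : numClosedFieldType) (n : nat) (W : 'M[C]_n)
  : Prop :=
  forall I, is_ideal W I -> (forall x, I x -> rho_m_zero W x) ->
    forall x, I x -> x = 0.

(* descn W m i = D^(m+1)(i);  D^1(i) = { j | W j i <> 0 } *)
Fixpoint descn (C : numClosedFieldType) (n : nat) (W : 'M[C]_n)
  (m : nat) (i : 'I_n) : 'I_n -> Prop :=
  match m with
  | 0 => fun j => W j i != 0
  | m'.+1 => fun k => exists j, descn W m' i j /\ W k j != 0
  end.

Definition desc (C : numClosedFieldType) (n : nat) (W : 'M[C]_n)
  (i j : 'I_n) : Prop := exists m, descn W m i j.

(* a \in lin { e_j^2 : j \in D(i) \cup {i} }, where e_j^2 = col j W *)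
Definition in_lin_desc (C : numClosedFieldType) (n : nat) (W : 'M[C]_n)
  (i : 'I_n) (a : 'cV[C]_n) : Prop :=
  exists c : 'I_n -> C,
    (forall j, ~ (j = i \/ desc W i j) -> c j = 0) /\
    a = \sum_j c j *: col j W.

From HB Require Import structures.
From mathcomp Require Import all_boot all_order all_algebra.
From Stdlib Require Import Classical.
Set Implicit Arguments. Unset Strict Implicit. Unset Printing Implicit Defensive.
Import Order.TTheory GRing.Theory Num.Theory.
Local Open Scope ring_scope.

(* Left multiplication by a is the matrix W diag(a).  As A is commutative, for
   lam <> 0 the element a - lam e (in A, or in its unitization) is m-invertible
   iff W diag(a) - lam is an invertible matrix, so rho_m(a) = 0 iff W diag(a)
   has no nonzero eigenvalue.  An ideal containing x with x_p <> 0 contains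
   e_p^2 = x_p^-1 e_p x and, since e_j e_k^2 = W j k e_j^2, every e_j^2 with
   j in D(p); hence it contains lin {e_j^2 : j in D(p) u {p}}, which is itself
   an ideal.  Conversely, if e_i^2 = 0 then C e_i is an ideal of elements
   annihilating A, so m-semisimplicity forces e_i^2 <> 0. *)

Section EvolutionAlgebra.
Variables (C : numClosedFieldType) (n : nat) (W : 'M[C]_n).

Lemma evmulE x y : evmul W x y = W *m diag_mx x^T *m y.
Proof.
rewrite /evmul -mulmxA mul_diag_mx; congr (_ *m _).
by apply/matrixP => i j; rewrite !mxE (ord1 j).
Qed.

Lemma evmulC x y : evmul W x y = evmul W y x.
Proof.
by rewrite /evmul; congr (_ *m _); apply/matrixP => i j; rewrite !mxE mulrC.
Qed.

Lemma evmul_sum_col x y : evmul W x y = \sum_k (x k 0 * y k 0) *: col k W.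
Proof.
apply/matrixP => i j; rewrite (ord1 j) !mxE summxE; apply: eq_bigr => k _.
by rewrite !mxE mulrC.
Qed.

Lemma evmul_delta k x : evmul W (delta_mx k 0) x = x k 0 *: col k W.
Proof.
rewrite evmul_sum_col (bigD1 k) //= big1 ?addr0 => [|j /negPf jk].
  by rewrite mxE !eqxx mul1r.
by rewrite mxE jk mul0r scale0r.
Qed.

Lemma evmulBZl x z c y :
  evmul W (x - c *: z) y = evmul W x y - c *: evmul W z y.
Proof.
rewrite /evmul scalemxAr -mulmxBr; congr (_ *m _).
by apply/matrixP => i j; rewrite !mxE mulrBl mulrA.
Qed.

Lemma evmul_eq0 b (y : 'cV[C]_n) :
  (forall k, y k 0 != 0 -> col k W = 0) -> evmul W b y = 0.
Proof.
move=> null_col; rewrite evmul_sum_col big1 // => k _.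
have [yk0|/null_col ->] := eqVneq (y k 0) 0; last by rewrite scaler0.
by rewrite yk0 mulr0 scale0r.
Qed.

Definition lmul_shift a lam := W *m diag_mx a^T - lam%:M.

Lemma eigenvalue_det a lam :
  eigenvalue (W *m diag_mx a^T) lam = (\det (lmul_shift a lam) == 0).
Proof.
apply/eigenvalueP/det0P => [[v Hv v_nz] | [v v_nz Hv]]; exists v => //.
  by rewrite /lmul_shift mulmxBr Hv mul_mx_scalar subrr.
by apply/eqP; rewrite -subr_eq0 -mul_mx_scalar -mulmxBr; apply/eqP.
Qed.

Lemma lmul_shift_unitmxE a lam :
  (lmul_shift a lam \in unitmx) = ~~ eigenvalue (W *m diag_mx a^T) lam.
Proof. by rewrite unitmxE unitfE eigenvalue_det. Qed.

Lemma eigenvalue_kernel a lam : eigenvalue (W *m diag_mx a^T) lam ->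
  exists2 v : 'cV[C]_n, v != 0 & lmul_shift a lam *m v = 0.
Proof.
rewrite eigenvalue_det -det_tr => /det0P [u u_nz Hu].
exists u^T; last by rewrite -[lmul_shift a lam]trmxK -trmx_mul Hu trmx0.
by apply: contra u_nz => /eqP u0; rewrite -[u]trmxK u0 trmx0.
Qed.

Lemma evmul_sub_unit e a lam : is_unit_elt W e ->
  evmul W (a - lam *: e) =1 mulmx (lmul_shift a lam).
Proof.
move=> unit_e y; rewrite evmulBZl (proj1 (unit_e y)) evmulE.
by rewrite /lmul_shift mulmxBl mul_scalar_mx.
Qed.

Lemma uprod_shift a lam y nu :
  uprod W (a, - lam) (y, nu) = (lmul_shift a lam *m y + nu *: a, - lam * nu).
Proof. by rewrite /uprod /= evmulE /lmul_shift mulmxBl mul_scalar_mx scaleNr. Qed.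

Lemma m_inv_A_left x : m_inv_A W x <-> bijective (evmul W x).
Proof.
split=> [[] // | bij_x]; split=> //.
by apply: (eq_bij bij_x) => y; rewrite evmulC.
Qed.

Lemma m_inv_unitz_left x : m_inv_unitz W x <-> bijective (uprod W x).
Proof.
split=> [[] // | bij_x]; split=> //; apply: (eq_bij bij_x) => y.
by rewrite /uprod evmulC mulrC addrAC.
Qed.

Lemma m_spec_eigenvalue a lam :
  lam != 0 -> m_spec W a lam -> eigenvalue (W *m diag_mx a^T) lam.
Proof.
move=> lam_nz spec_lam; apply: contraT => not_eig; exfalso.
have U : lmul_shift a lam \in unitmx by rewrite lmul_shift_unitmxE.
have bij_shift : bijective (fun y : 'cV[C]_n => lmul_shift a lam *m y).
  exists (fun y => invmx (lmul_shift a lam) *m y) => y.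
    exact: mulKmx.
  exact: mulKVmx.
case: spec_lam => [[e [unit_e]] | [_]];
  [rewrite m_inv_A_left | rewrite m_inv_unitz_left]; apply.
  by apply: (eq_bij bij_shift) => y; rewrite evmul_sub_unit.
have mlam_nz : - lam != 0 by rewrite oppr_eq0.
exists (fun zt : 'cV[C]_n * C =>
  (invmx (lmul_shift a lam) *m (zt.1 - (zt.2 / - lam) *: a), zt.2 / - lam)).
  by case=> y nu; rewrite uprod_shift /= mulrC mulKf // addrK mulKmx.
by case=> z t; rewrite uprod_shift /= mulKVmx // subrK mulrC divfK.
Qed.

Lemma eigenvalue_m_spec a lam :
  lam != 0 -> eigenvalue (W *m diag_mx a^T) lam -> m_spec W a lam.
Proof.
move=> lam_nz /eigenvalue_kernel [v v_nz Hv].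
have [[e unit_e] | not_unital] := classic (unital W).
  left; exists e; split=> // -[/bij_inj inj_shift _].
  have v0 : v = 0.
    by apply: inj_shift; rewrite !(evmul_sub_unit _ _ unit_e) Hv mulmx0.
  by rewrite v0 eqxx in v_nz.
right; split=> // -[/bij_inj inj_shift _].
have := inj_shift (v, 0) (0, 0).
rewrite !uprod_shift Hv mulmx0 scale0r addr0 mulr0 => /(_ erefl) [v0].
by rewrite v0 eqxx in v_nz.
Qed.

Lemma rho_m_zeroP a : rho_m_zero W a <->
  ~ exists lam, lam != 0 /\ eigenvalue (W *m diag_mx a^T) lam.
Proof.
split=> [rho0 [lam [lam_nz eig_lam]] | no_eig lam spec_lam].
  move/eqP: (rho0 lam (eigenvalue_m_spec lam_nz eig_lam)).
  by rewrite normr_eq0 (negbTE lam_nz).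
have [-> | lam_nz] := eqVneq lam 0; first by rewrite normr0.
by case: no_eig; exists lam; split=> //; apply: m_spec_eigenvalue.
Qed.

Lemma rho_m_zero_annihilator x : (forall y, evmul W x y = 0) -> rho_m_zero W x.
Proof.
move=> ann_x; apply/rho_m_zeroP.
move=> -[lam [lam_nz /eigenvalue_kernel [v v_nz Hv]]].
move: Hv; rewrite /lmul_shift mulmxBl -evmulE ann_x mul_scalar_mx sub0r.
by move/eqP; rewrite oppr_eq0 scaler_eq0 (negbTE lam_nz) (negbTE v_nz).
Qed.

Lemma ideal_col I y k : is_ideal W I -> I y -> y k 0 != 0 -> I (col k W).
Proof.
case=> _ _ idealZ idealL _ Iy yk_nz.
have -> : col k W = (y k 0)^-1 *: evmul W (delta_mx k 0) y.
  by rewrite evmul_delta scalerA mulVf // scale1r.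
exact/idealZ/idealL.
Qed.

Lemma ideal_col_desc I y p : is_ideal W I -> I y -> y p 0 != 0 ->
  forall j, j = p \/ desc W p j -> I (col j W).
Proof.
move=> idealI Iy yp_nz; have Ip := ideal_col idealI Iy yp_nz.
move=> j [-> // | [m]]; elim: m j => [|m IHm] j /=.
  by move=> Wjp; apply: (ideal_col idealI Ip); rewrite mxE.
by move=> [k [desc_k Wjk]]; apply: (ideal_col idealI (IHm _ desc_k)); rewrite mxE.
Qed.

Lemma ideal_lin_desc I p : is_ideal W I ->
  (forall j, j = p \/ desc W p j -> I (col j W)) ->
  forall a, in_lin_desc W p a -> I a.
Proof.
case=> I0 idealD idealZ _ _ Icol a [c [c_supp ->]].
apply: (big_ind I) => // j _.
have [/Icol/idealZ // | not_desc] := classic (j = p \/ desc W p j).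
by rewrite c_supp // scale0r.
Qed.

Lemma desc_step i j k : j = i \/ desc W i j -> W k j != 0 -> desc W i k.
Proof.
case=> [-> Wki | [m desc_j] Wkj]; first by exists 0%N.
by exists m.+1, j.
Qed.

Lemma in_lin_desc_support i x k :
  in_lin_desc W i x -> x k 0 != 0 -> desc W i k.
Proof.
move=> [c [c_supp ->]] xk_nz; apply: NNPP => not_desc; move: xk_nz.
rewrite summxE big1 ?eqxx // => j _; rewrite !mxE.
have [-> | Wkj] := eqVneq (W k j) 0; first by rewrite mulr0.
by rewrite c_supp ?mul0r // => /desc_step/(_ Wkj).
Qed.

Lemma in_lin_desc_evmul i b x :
  in_lin_desc W i x -> in_lin_desc W i (evmul W b x).
Proof.
move=> lin_x; exists (fun k => b k 0 * x k 0); split; last exact: evmul_sum_col.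
move=> k not_desc; apply/eqP; rewrite mulf_eq0; apply/orP; right.
by apply: contraT => /(in_lin_desc_support lin_x) desc_k; case: not_desc; right.
Qed.

Lemma in_lin_desc_ideal i : is_ideal W (in_lin_desc W i).
Proof.
split=> [|x y [c [c_supp ->]] [d [d_supp ->]] | t x [c [c_supp ->]] | x b | x b].
- by exists (fun _ => 0); split=> //; rewrite big1 // => j _; rewrite scale0r.
- exists (fun j => c j + d j); split.
    by move=> j not_desc; rewrite c_supp ?d_supp ?addr0.
  by rewrite -big_split; apply: eq_bigr => j _; rewrite scalerDl.
- exists (fun j => t * c j); split.
    by move=> j not_desc; rewrite c_supp ?mulr0.
  by rewrite scaler_sumr; apply: eq_bigr => j _; rewrite scalerA.
- exact: in_lin_desc_evmul.
- by rewrite evmulC; apply: in_lin_desc_evmul.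
Qed.

Lemma in_lin_desc_col i : in_lin_desc W i (col i W).
Proof.
exists (fun j => (j == i)%:R); split.
  by move=> j not_desc; case: eqVneq => // ji; case: not_desc; left.
rewrite (bigD1 i) //= eqxx scale1r big1 ?addr0 // => j /negPf ->.
by rewrite scale0r.
Qed.

Lemma m_semisimple_col_neq0 i : m_semisimple W -> col i W != 0.
Proof.
move=> ss; apply/eqP => null_col.
pose line (x : 'cV[C]_n) := exists t : C, x = t *: delta_mx i 0.
have ann_line x b : line x -> evmul W b x = 0.
  move=> [t ->]; apply: evmul_eq0 => k.
  by rewrite !mxE eqxx andbT; case: (eqVneq k i) => [-> | _]; rewrite ?mulr0 ?eqxx.
have line_ideal : is_ideal W line.
  split.
  - by exists 0; rewrite scale0r.
  - by move=> _ _ [t ->] [u ->]; exists (t + u); rewrite scalerDl.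
  - by move=> s _ [t ->]; exists (s * t); rewrite scalerA.
  - by move=> x b line_x; rewrite ann_line //; exists 0; rewrite scale0r.
  - by move=> x b line_x; rewrite evmulC ann_line //; exists 0; rewrite scale0r.
have rho_line x : line x -> rho_m_zero W x.
  by move=> line_x; apply: rho_m_zero_annihilator => y; rewrite evmulC ann_line.
have line_e : line (delta_mx i 0) by exists 1; rewrite scale1r.
have /matrixP/(_ i 0) := ss _ line_ideal rho_line _ line_e.
by rewrite !mxE !eqxx => /eqP; rewrite oner_eq0.
Qed.

End EvolutionAlgebra.

Theorem corollary5p9 (C : numClosedFieldType) (n : nat) (W : 'M[C]_n) :
  m_semisimple W <->
  (forall i : 'I_n, exists a : 'cV[C]_n,
     in_lin_desc W i a /\
     exists lam : C, lam != 0 /\ eigenvalue (W *m diag_mx a^T) lam).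
Proof.
split=> [ss i | eig_desc I idealI rho_I x Ix].
  apply: NNPP => no_eig; move/eqP: (m_semisimple_col_neq0 i ss); apply.
  apply: (ss _ (in_lin_desc_ideal W i) _ _ (in_lin_desc_col W i)) => a lin_a.
  apply/rho_m_zeroP => -[lam eig_lam].
  by apply: no_eig; exists a; split=> //; exists lam.
apply/matrixP => p q; rewrite (ord1 q) mxE.
have [// | xp_nz] := eqVneq (x p 0) 0; exfalso.
have [a [lin_a eig_a]] := eig_desc p.
have Ia := ideal_lin_desc idealI (ideal_col_desc idealI Ix xp_nz) lin_a.
by move/rho_m_zeroP: (rho_I _ Ia); apply.
Qed.
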